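(* Let $G$ be a finite loopless multigraph and let $p$ be a positive integer. Then $$({\rm Arb}_p(G))^p\ \ge\ \max\{{\rm Arb}(H): H \text{ a loopless multigraph such that } G \text{ contains a } \le(p-1)\text{-subdivision of } H \text{ as a subgraph}\}\ \ge\ \widetilde\nabla^{\rm m}_{(p-1)/2}(G).$$
   Context: All multigraphs are finite and loopless; a cycle of length $2$ is formed by two parallel edges, and $|C|$ denotes the number of edges of a cycle $C$. ${\rm Arb}(H)$ is the minimum number of forests into which the edge set of $H$ can be partitioned. ${\rm Arb}_p(G)$ is the minimum number of colours in an edge colouring of $G$ such that every cycle $C$ of $G$ receives at least $\min(|C|,p+1)$ distinct colours. For a non-negative integer $k$, a $\le k$-subdivision of a multigraph $H$ is obtained by replacing each edge of $H$ (each parallel copy separately) by a path with at most $k$ internal vertices, the paths being internally vertex-disjoint and avoiding the vertices of $H$. For a half-integer $r\ge 0$, $\widetilde\nabla^{\rm m}_r(G)$ is the maximum of $\|H\|/|H|$ over all loopless multigraphs $H$ (with $|H|\ge 1$) such that some $\le 2r$-subdivision of $H$ is a subgraph of $G$, where $\|H\|$ counts edges with multiplicity. *)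

From HB Require Import structures.
From mathcomp Require Import all_boot all_order all_algebra.
Set Implicit Arguments. Unset Strict Implicit. Unset Printing Implicit Defensive.
Import Order.TTheory GRing.Theory Num.Theory.

(* A finite multigraph: finite vertex type, finite edge type (each element is
   one parallel copy), and an endpoint map. *)
Record mgraph := MGraph {
  mV : finType;
  mE : finType;
  mends : mE -> mV * mV
}.

Definition loopless (G : mgraph) : Prop :=
  forall e : mE G, (mends e).1 <> (mends e).2.

Definition joins (G : mgraph) (e : mE G) (x y : mV G) : Prop :=
  mends e = (x, y) \/ mends e = (y, x).

(* A cycle of length k >= 2: distinct vertices vs 0..k-1, distinct edges
   es 0..k-1, edge es i joining vs i and vs (i+1 mod k). For k = 2 this is a
   pair of parallel edges. *)
Definition cycle_in (G : mgraph) (k : nat) (vs : 'I_k -> mV G) (es : 'I_k -> mE G)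
  : Prop :=
  2 <= k /\ injective vs /\ injective es /\
  forall i : 'I_k, joins (es i) (vs i) (vs (ordS i)).

Definition p_colouring (G : mgraph) (p c : nat) (col : mE G -> 'I_c) : Prop :=
  forall k (vs : 'I_k -> mV G) (es : 'I_k -> mE G), cycle_in vs es ->
    minn k p.+1 <= #|[set col (es i) | i : 'I_k]|.

Definition is_Arbp (G : mgraph) (p c : nat) : Prop :=
  (exists col : mE G -> 'I_c, p_colouring p col) /\
  forall c' (col' : mE G -> 'I_c'), p_colouring p col' -> c <= c'.

Definition forest_colouring (H : mgraph) (a : nat) (col : mE H -> 'I_a) : Prop :=
  forall k (vs : 'I_k -> mV H) (es : 'I_k -> mE H) (x : 'I_a),
    cycle_in vs es -> ~ (forall i, col (es i) = x).

Definition is_Arb (H : mgraph) (a : nat) : Prop :=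
  (exists col : mE H -> 'I_a, forest_colouring col) /\
  forall a' (col' : mE H -> 'I_a'), forest_colouring col' -> a <= a'.

(* G contains a <= t-subdivision of H as a subgraph: branch vertices phi
   (injective); each edge e of H (with ends (u,v)) becomes a path of l e edges
   (1 <= l e <= t+1, i.e. at most t internal vertices), with vertices
   w e 0 = phi u, ..., w e (l e) = phi v and edges f e i joining w e i and
   w e (i+1).  The whole subdivided graph maps injectively into G: paths are
   vertex-injective, internal vertices avoid phi's image and are distinct
   across paths, and all edges used are distinct. *)
Definition subdiv_in (G : mgraph) (t : nat) (H : mgraph) : Prop :=
  exists (phi : mV H -> mV G) (l : mE H -> nat)
         (w : forall e : mE H, 'I_(l e).+1 -> mV G)
         (f : forall e : mE H, 'I_(l e) -> mE G),
    injective phi /\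
    (forall e, 1 <= l e <= t.+1) /\
    (forall e, w e ord0 = phi (mends e).1) /\
    (forall e, w e ord_max = phi (mends e).2) /\
    (forall e (i : 'I_(l e)),
        joins (f e i) (w e (widen_ord (leqnSn _) i)) (w e (lift ord0 i))) /\
    (forall e, injective (w e)) /\
    (forall e (j : 'I_(l e).+1) x, 0 < j < l e -> w e j <> phi x) /\
    (forall e e' (j : 'I_(l e).+1) (j' : 'I_(l e').+1),
        0 < j < l e -> 0 < j' < l e' -> w e j = w e' j' -> e = e') /\
    (forall e e' (i : 'I_(l e)) (i' : 'I_(l e')),
        f e i = f e' i' -> e = e' /\ (i : nat) = i').

Definition is_max_Arb (G : mgraph) (t M : nat) : Prop :=
  (exists H, loopless H /\ subdiv_in G t H /\ is_Arb H M) /\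
  forall H a, loopless H -> subdiv_in G t H -> is_Arb H a -> a <= M.

(* q = \widetilde\nabla^m_r(G) with t = 2r (so r = t/2 is a half-integer). *)
Definition is_nabla_m (G : mgraph) (t : nat) (q : rat) : Prop :=
  (exists H, loopless H /\ subdiv_in G t H /\ 0 < #|mV H| /\
     q = (#|mE H|%:R / #|mV H|%:R)%R) /\
  forall H, loopless H -> subdiv_in G t H -> 0 < #|mV H| ->
     (#|mE H|%:R / #|mV H|%:R <= q)%R.

From HB Require Import structures.
From mathcomp Require Import all_boot all_order all_algebra.
From mathcomp Require Import zify.
From Stdlib Require Import Classical.
Import Order.TTheory GRing.Theory Num.Theory.
Set Implicit Arguments. Unset Strict Implicit. Unset Printing Implicit Defensive.

(* Colour each edge e of H by the word of colours that a p-colouring of G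
   gives along the path subdividing e (padded to length p by repeating its last
   letter).  If a cycle of H were monochromatic, all its paths would carry the
   same word; the union of these paths has minimum degree 2 and so contains a
   cycle C of G.  Internal path vertices have degree 2 in the union, so C
   contains a whole path P and is strictly longer than it, while C sees only
   the <= |P| <= p colours of P's word, contradicting that C gets
   min(|C|, p+1) colours.  Hence Arb(H) <= c^p; the bound on the density
   comes from a forest having at most as many edges as vertices. *)

Lemma ex_minn_prop (P : nat -> Prop) n :
  P n -> exists m, P m /\ forall k, P k -> m <= k.
Proof.
elim/ltn_ind: n => n IH Pn.
case: (classic (exists k, P k /\ k < n)) => [[k [Pk kn]]|n_min]; first exact: IH Pk.
exists n; split=> // k Pk; rewrite leqNgt; apply/negP => kn; apply: n_min; by exists k.
Qed.

Lemma ex_maxn_prop (P : nat -> Prop) B n :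
  P n -> (forall k, P k -> k <= B) -> exists m, P m /\ forall k, P k -> k <= m.
Proof.
move=> Pn PB.
pose Q d := d <= B /\ P (B - d).
have QP k : P k -> Q (B - k) by move=> Pk; split; rewrite ?subKn ?leq_subr ?PB.
have [d [[_ Pd] d_min]] := ex_minn_prop (QP n Pn).
exists (B - d); split=> // k Pk; have := d_min _ (QP k Pk); have := PB k Pk; lia.
Qed.

Lemma ordS_val k (i : 'I_k) : (ordS i : nat) = if i.+1 < k then i.+1 else 0.
Proof.
rewrite /ordS /=; case: ifP => h; first by rewrite modn_small.
have -> : i.+1 = k by have := ltn_ord i; lia.
by rewrite modnn.
Qed.

Lemma ord_pred_neq k (i : 'I_k) : 1 < k -> ord_pred i != i.
Proof.
move=> k_gt1; apply/eqP => Ei.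
have /(congr1 (@nat_of_ord k)) : ordS i = i by rewrite -{1}Ei ord_predK.
rewrite ordS_val; case: ifP; have := ltn_ord i; lia.
Qed.

Lemma ltn_propagate (P : nat -> Prop) n j0 : j0 < n -> P j0 ->
  (forall j, j.+1 < n -> P j \/ P j.+1 -> P j /\ P j.+1) ->
  forall j, j < n -> P j.
Proof.
move=> j0n Pj0 step.
have P0 : P 0.
  suff: forall d, d <= j0 -> P (j0 - d) by move=> /(_ j0 (leqnn _)); rewrite subnn.
  elim=> [|d IH] dj0; first by rewrite subn0.
  have E : (j0 - d.+1).+1 = j0 - d by lia.
  have := IH ltac:(lia); rewrite -E => P_succ.
  by have [] := step (j0 - d.+1) ltac:(lia) (or_intror P_succ).
elim=> [|j IH] jn //; by have [] := step j jn (or_introl (IH ltac:(lia))).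
Qed.

Section Incidence.
Variable G : mgraph.
Notation V := (mV G).
Notation E := (mE G).
Implicit Types (e : E) (x y z u : V).

Definition incident (e : E) (x : V) := ((mends e).1 == x) || ((mends e).2 == x).
Definition other_end (e : E) (x : V) :=
  if (mends e).1 == x then (mends e).2 else (mends e).1.

Lemma joins_sym e x y : joins e x y -> joins e y x.
Proof. by case; [right | left]. Qed.

Lemma incident_joins e x : incident e x -> joins e x (other_end e x).
Proof.
rewrite /incident /other_end /joins; case: (mends e) => a b /=.
by case: eqP => [->|_ /eqP->]; [left | right].
Qed.

Lemma joinsP e x y : joins e x y -> [/\ incident e x, incident e y & other_end e x = y].
Proof.
rewrite /incident /other_end /joins; case: (mends e) => a b /= [[-> ->]|[-> ->]];
  by rewrite !eqxx ?orbT; split=> //; case: eqP.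
Qed.

Lemma joins_incident e x y z : joins e x y -> incident e z -> z = x \/ z = y.
Proof.
by rewrite /incident /joins => -[]-> /orP[]/eqP<-; auto.
Qed.

Lemma joins_eq e x y x' y' : joins e x y -> joins e x' y' ->
  (x = x' /\ y = y') \/ (x = y' /\ y = x').
Proof. by rewrite /joins => -[]-> [][-> ->]; auto. Qed.

Lemma other_end_ends e x : other_end e x = (mends e).1 \/ other_end e x = (mends e).2.
Proof. by rewrite /other_end; case: ifP; auto. Qed.

Section CycleFacts.
Variables (k : nat) (vs : 'I_k -> V) (es : 'I_k -> E).
Hypothesis cyc : cycle_in vs es.

Lemma cycle_edges_at (m : 'I_k) : exists r1 r2,
  [/\ es r1 != es r2, incident (es r1) (vs m) & incident (es r2) (vs m)].
Proof.
have [k_gt1 [_ [es_inj es_joins]]] := cyc.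
exists m, (ord_pred m); split.
- by apply/eqP => /es_inj /eqP; rewrite eq_sym (negbTE (ord_pred_neq m k_gt1)).
- by have [] := joinsP (es_joins m).
- by have [_ +] := joinsP (es_joins (ord_pred m)); rewrite ord_predK.
Qed.

Lemma cycle_vertex_incident (r : 'I_k) x : incident (es r) x -> exists m, vs m = x.
Proof.
have [_ [_ [_ es_joins]]] := cyc.
by case/(joins_incident (es_joins r)) => ->; eauto.
Qed.

End CycleFacts.

Hypothesis loopless_G : loopless G.

Lemma joins_neq e x y : joins e x y -> x <> y.
Proof. by move=> + xy; rewrite xy => -[] Ee; have := @loopless_G e; rewrite Ee. Qed.

Section CycleFromMinDegree.
Variables (S : {set V}) (F : {set E}).

Definition deg2_at x := exists e1 e2, [/\ e1 != e2, e1 \in F & e2 \in F] /\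
  [/\ incident e1 x, incident e2 x, other_end e1 x \in S & other_end e2 x \in S].

Definition simple_path m (vs : nat -> V) (es : nat -> E) :=
  [/\ forall i j, i <= m -> j <= m -> vs i = vs j -> i = j,
      forall i, i <= m -> vs i \in S &
      forall i, i < m -> es i \in F /\ joins (es i) (vs i) (vs i.+1)].

Section SimplePath.
Variables (m : nat) (vs : nat -> V) (es : nat -> E).
Hypothesis path_vs_es : simple_path m vs es.

Lemma simple_path_length : m < #|V|.
Proof.
have [vs_inj _ _] := path_vs_es.
have inj : injective (fun i : 'I_m.+1 => vs i).
  by move=> i j /vs_inj Eij; apply: ord_inj; apply: Eij; rewrite -ltnS.
by have := max_card [set vs i | i : 'I_m.+1]; rewrite card_imset // card_ord.
Qed.

Lemma simple_path_edges_inj i j : i < m -> j < m -> es i = es j -> i = j.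
Proof.
have [vs_inj _ es_joins] := path_vs_es => im jm Eij.
have [_ Ji] := es_joins i im; have [_ Jj] := es_joins j jm; rewrite Eij in Ji.
case: (joins_eq Ji Jj) => [[Ev _]|[Ev Ev']]; first by apply: vs_inj Ev; lia.
have := vs_inj _ _ _ _ Ev; have := vs_inj _ _ _ _ Ev'; lia.
Qed.

Lemma simple_path_extend e u : e \in F -> joins e (vs m) u -> u \in S ->
  (forall a, a <= m -> vs a <> u) ->
  simple_path m.+1 (fun j => if j <= m then vs j else u) (fun j => if j < m then es j else e).
Proof.
have [vs_inj vs_S es_joins] := path_vs_es => eF Je uS u_new; split.
- move=> i j im jm; case: ifP => i_le; case: ifP => j_le.
  + exact: vs_inj.
  + by move/u_new: i_le.
  + by move=> /esym; move/u_new: j_le.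
  + lia.
- by move=> i _; case: ifP => [/vs_S|].
- move=> i im; case: ifP => i_lt; first by rewrite ltnW //; exact: es_joins.
  have -> : i = m by lia.
  by rewrite /= leqnn.
Qed.

Lemma simple_path_close e a : e \in F -> joins e (vs m) (vs a) -> a < m ->
  e != es m.-1 -> exists k (vs' : 'I_k -> V) (es' : 'I_k -> E),
    cycle_in vs' es' /\ forall i, es' i \in F.
Proof.
have [vs_inj vs_S es_joins] := path_vs_es => eF Je am e_last.
have e_new i : a <= i < m -> e != es i.
  move=> /andP[ai im]; apply/eqP => Ee; have [_ Ji] := es_joins i im.
  rewrite -Ee in Ji; case: (joins_eq Je Ji) => [[Ev _]|[Ev _]].
    by have := vs_inj _ _ (leqnn m) (ltnW im) Ev; lia.
  by move: e_last; rewrite (vs_inj _ _ (leqnn m) im Ev) /= -Ee eqxx.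
exists (m - a).+1, (fun i => vs (a + i)),
  (fun i => if (i : nat) < m - a then es (a + i) else e).
split; last by move=> i; case: ifP => // ?; have [] := es_joins (a + i) ltac:(lia).
split; first lia.
split.
  move=> i j Eij; apply: ord_inj; have := ltn_ord i; have := ltn_ord j => jm im.
  by have := vs_inj (a + i) (a + j) ltac:(lia) ltac:(lia) Eij; lia.
split.
  move=> i j; have := ltn_ord i; have := ltn_ord j => jm im.
  case: ifP => i_lt; case: ifP => j_lt.
  - move/simple_path_edges_inj => Eij; apply: ord_inj.
    by have := Eij ltac:(lia) ltac:(lia); lia.
  - by move=> Ee; move: (e_new (a + i) ltac:(lia)); rewrite Ee eqxx.
  - by move=> Ee; move: (e_new (a + j) ltac:(lia)); rewrite Ee eqxx.
  - by move=> _; apply: ord_inj; lia.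
move=> i; rewrite ordS_val; have := ltn_ord i => im.
case: ifP => i_lt.
  have -> : i.+1 < (m - a).+1 by lia.
  by have [_] := es_joins (a + i) ltac:(lia); rewrite addnS.
have -> : (i.+1 < (m - a).+1) = false by lia.
have -> : a + i = m by lia.
by rewrite addn0.
Qed.

End SimplePath.

Lemma cycle_of_deg2 x0 : x0 \in S -> {in S, forall x, deg2_at x} ->
  exists k (vs : 'I_k -> V) (es : 'I_k -> E), cycle_in vs es /\ forall i, es i \in F.
Proof.
(* Without a cycle every simple path extends, so one of length |V| would exist. *)
move=> x0S deg2; apply: NNPP => acyclic.
suff /(_ #|V|) [vs [es /simple_path_length]] : forall m, exists vs es, simple_path m vs es.
  by rewrite ltnn.
elim=> [|m [vs [es path_m]]].
  have [e0 _] := deg2 _ x0S.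
  by exists (fun=> x0), (fun=> e0); split=> //; lia.
have [_ vs_S _] := path_m.
have [e [eF e_at uS e_fresh]] : exists e, [/\ e \in F, incident e (vs m),
    other_end e (vs m) \in S & 0 < m -> e != es m.-1].
  have [e1 [e2 [[ne e1F e2F] [i1 i2 o1 o2]]]] := deg2 _ (vs_S m (leqnn m)).
  case: (eqVneq e1 (es m.-1)) => [E1|N1]; last by exists e1.
  by exists e2; split=> // _; rewrite -E1 eq_sym.
have Je := incident_joins e_at; set u := other_end e (vs m) in uS Je.
case: (boolP [exists a : 'I_m.+1, vs a == u]) => [/existsP[a /eqP ua]|u_new].
  have am : a < m.
    rewrite ltn_neqAle -ltnS ltn_ord andbT; apply/eqP => am.
    by apply: (joins_neq Je); rewrite -ua am.
  case: acyclic; apply: (simple_path_close path_m eF _ am); first by rewrite ua.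
  by apply: e_fresh; lia.
exists (fun j => if j <= m then vs j else u), (fun j => if j < m then es j else e).
apply: simple_path_extend => // a am ua.
by move/existsP: u_new; apply; exists (Ordinal (am : a < m.+1)); apply/eqP.
Qed.

End CycleFromMinDegree.

Definition edges_within (F : {set E}) (S : {set V}) :=
  [set e in F | ((mends e).1 \in S) && ((mends e).2 \in S)].

Lemma edges_within0 F : edges_within F set0 = set0.
Proof. by apply/setP => e; rewrite !inE /= andbF. Qed.

Lemma acyclic_card_le (F : {set E}) :
  (forall k (vs : 'I_k -> V) (es : 'I_k -> E), cycle_in vs es -> ~ forall i, es i \in F) ->
  #|F| <= #|V|.
Proof.
move=> acyclic.
suff /(_ #|V| setT) : forall n (S : {set V}), #|S| <= n -> #|edges_within F S| <= #|S|.
  have -> : edges_within F setT = F by apply/setP => e; rewrite !inE !andbT.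
  by move=> /(_ (max_card _)); rewrite cardsT.
elim=> [|n IH] S cardS; case: (set_0Vmem S) => [->|[x0 x0S]];
  rewrite ?edges_within0 ?cards0 //.
  by move: cardS; rewrite leqn0 => /eqP/cards0_eq S0; rewrite S0 inE in x0S.
have within_S e x : e \in edges_within F S -> other_end e x \in S.
  by rewrite inE => /and3P[_ e1S e2S]; case: (other_end_ends e x) => ->.
have [[x [xS not_deg2]]|all_deg2] :=
  classic (exists x, x \in S /\ ~ deg2_at S (edges_within F S) x); last first.
  have deg2 : {in S, forall x, deg2_at S (edges_within F S) x}.
    by move=> x xS; apply: NNPP => not_deg2; apply: all_deg2; exists x.
  have [k [vs [es [cyc es_in]]]] := cycle_of_deg2 x0S deg2.
  by case: (acyclic k vs es cyc) => i; have := es_in i; rewrite inE => /andP[].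
(* x meets at most one edge inside S, so removing it loses at most one edge. *)
pose D := [set e in edges_within F S | incident e x].
have cardD : #|D| <= 1.
  apply/card_le1_eqP => e1 e2 /setIdP[e1F i1] /setIdP[e2F i2].
  apply/eqP; apply/negPn/negP => ne; apply: not_deg2; exists e2, e1.
  by split; split=> //; apply: within_S.
have sub : edges_within F S \subset edges_within F (S :\ x) :|: D.
  apply/subsetP => e eF; rewrite inE; case ex: (incident e x).
    by rewrite [e \in D]inE eF ex orbT.
  by move: eF ex; rewrite /incident !inE => /and3P[-> -> ->] /norP[-> ->].
have := subset_leq_card sub; rewrite cardsU.
have := IH (S :\ x); rewrite (cardsD1 x S) xS in cardS *; lia.
Qed.
End Incidence.

Lemma forest_card_edges (H : mgraph) a (col : mE H -> 'I_a) :
  loopless H -> forest_colouring col -> #|mE H| <= a * #|mV H|.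
Proof.
move=> loopless_H forest_col.
have -> : #|mE H| = \sum_(x : 'I_a) #|[set e | col e == x]|.
  rewrite -sum1_card (partition_big col xpredT) //=.
  by apply: eq_bigr => x _; rewrite -sum1_card; apply: eq_bigl => e; rewrite inE.
rewrite -[a in a * _]card_ord -sum_nat_const; apply: leq_sum => x _.
apply: acyclic_card_le => // k vs es cyc es_x; apply: (forest_col k vs es x cyc) => i.
by have := es_x i; rewrite inE => /eqP.
Qed.

Section Subdivision.
Variables (G H : mgraph) (t : nat) (phi : mV H -> mV G) (l : mE H -> nat)
  (w : forall e : mE H, 'I_(l e).+1 -> mV G) (f : forall e : mE H, 'I_(l e) -> mE G).
Arguments w : clear implicits.
Arguments f : clear implicits.
Implicit Types (X : {set mE H}) (e : mE H).
Hypotheses (l_bounds : forall e, 1 <= l e <= t.+1)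
  (w_first : forall e, w e ord0 = phi (mends e).1)
  (w_last : forall e, w e ord_max = phi (mends e).2)
  (f_joins : forall e (i : 'I_(l e)),
     joins (f e i) (w e (widen_ord (leqnSn _) i)) (w e (lift ord0 i)))
  (w_inj : forall e, injective (w e))
  (w_internal : forall e (j : 'I_(l e).+1) x, 0 < j < l e -> w e j <> phi x)
  (w_internal_disjoint : forall e e' (j : 'I_(l e).+1) (j' : 'I_(l e').+1),
     0 < j < l e -> 0 < j' < l e' -> w e j = w e' j' -> e = e')
  (f_inj : forall e e' (i : 'I_(l e)) (i' : 'I_(l e')),
     f e i = f e' i' -> e = e' /\ (i : nat) = i').

Lemma clamp_lt e j : minn j (l e).-1 < l e.
Proof. have := l_bounds e; lia. Qed.

Definition wn e j := w e (inord j).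
(* The subdivision path of e read with natural-number indices.  Edge indices
   j >= l e are clamped to the last edge, so that every path has a colour code
   of the same length in [path_code] below. *)
Definition fn e j := f e (Ordinal (clamp_lt e j)).

Lemma wn_ord e (j : 'I_(l e).+1) : wn e j = w e j.
Proof. by rewrite /wn inord_val. Qed.

Lemma fn_ord e (i : 'I_(l e)) : fn e i = f e i.
Proof. by rewrite /fn; congr (f e _); apply: ord_inj => /=; have := ltn_ord i; lia. Qed.

Lemma fn_clamp e j : fn e j = fn e (minn j (l e).-1).
Proof. by rewrite /fn; congr (f e _); apply: ord_inj => /=; lia. Qed.

Lemma fn_joins e j : j < l e -> joins (fn e j) (wn e j) (wn e j.+1).
Proof.
move=> jl; have := f_joins (Ordinal jl); rewrite -(fn_ord (Ordinal jl)).
by rewrite -(wn_ord (widen_ord _ _)) -(wn_ord (lift _ _)) /= /bump leq0n.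
Qed.

Lemma wn_first e : wn e 0 = phi (mends e).1.
Proof. by rewrite -w_first -(wn_ord ord0). Qed.

Lemma wn_last e : wn e (l e) = phi (mends e).2.
Proof. by rewrite -w_last -(wn_ord ord_max). Qed.

Lemma wn_inj e i j : i <= l e -> j <= l e -> wn e i = wn e j -> i = j.
Proof. by move=> il jl /w_inj /(congr1 val) /=; rewrite !inordK. Qed.

Lemma wn_internal e j x : 0 < j < l e -> wn e j <> phi x.
Proof. by move=> jl; apply: w_internal; rewrite inordK //; lia. Qed.

Lemma wn_internal_disjoint e e' j j' :
  0 < j < l e -> 0 < j' < l e' -> wn e j = wn e' j' -> e = e'.
Proof. by move=> jl jl'; apply: w_internal_disjoint; rewrite inordK //; lia. Qed.

Lemma fn_inj e e' i i' : i < l e -> i' < l e' -> fn e i = fn e' i' -> e = e' /\ i = i'.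
Proof. by move=> il il' /f_inj [Ee Ei]; subst e'; split=> //; move: Ei => /=; lia. Qed.

Lemma internal_incident e j e' i : 0 < j < l e -> i < l e' ->
  incident (fn e' i) (wn e j) -> e' = e /\ (i = j \/ i.+1 = j).
Proof.
move=> jl il' inc_ij.
have [r [rl Er ri]] : exists r, [/\ r <= l e', wn e j = wn e' r & r = i \/ r = i.+1].
  by case: (joins_incident (fn_joins il') inc_ij) => ->;
    [exists i | exists i.+1]; split=> //; lia.
have r_internal : 0 < r < l e'.
  case: (posnP r) => [r0|r_gt0].
    by case: (@wn_internal e j (mends e').1 jl); rewrite Er r0 wn_first.
  case: (ltngtP r (l e')) => [| |rl']; [lia | lia | ].
  by case: (@wn_internal e j (mends e').2 jl); rewrite Er rl' wn_last.
have Ee := wn_internal_disjoint jl r_internal Er; subst e'.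
by split=> //; have := @wn_inj e j r ltac:(lia) rl Er; lia.
Qed.

Lemma path_end_edge e z : z = (mends e).1 \/ z = (mends e).2 ->
  exists i j, [/\ i < l e, j <= l e & joins (fn e i) (phi z) (wn e j)].
Proof.
have := l_bounds e => le_bounds.
case=> ->; first by exists 0, 1; rewrite -wn_first; split; [lia | lia | apply: fn_joins; lia].
exists (l e).-1, (l e).-1; split; [lia | lia | ].
rewrite -wn_last; have := @fn_joins e (l e).-1 ltac:(lia).
by rewrite prednK; [exact: joins_sym | lia].
Qed.

Definition path_vertices (X : {set mE H}) :=
  [set y | [exists e in X, exists j : 'I_(l e).+1, y == wn e j]].
Definition path_edges (X : {set mE H}) :=
  [set g | [exists e in X, exists i : 'I_(l e), g == fn e i]].

Lemma mem_path_vertices X e j : e \in X -> j <= l e -> wn e j \in path_vertices X.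
Proof.
rewrite -ltnS => eX jl; rewrite inE; apply/existsP; exists e; rewrite eX /=.
by apply/existsP; exists (Ordinal jl).
Qed.

Lemma mem_path_edges X e i : e \in X -> i < l e -> fn e i \in path_edges X.
Proof.
move=> eX il; rewrite inE; apply/existsP; exists e; rewrite eX /=.
by apply/existsP; exists (Ordinal il).
Qed.

Lemma path_verticesP X y : y \in path_vertices X ->
  exists e j, [/\ e \in X, j <= l e & y = wn e j].
Proof.
rewrite inE => /existsP[e /andP[eX /existsP[j /eqP ->]]].
by exists e, j; rewrite -ltnS ltn_ord.
Qed.

Lemma path_edgesP X g : g \in path_edges X ->
  exists e i, [/\ e \in X, i < l e & g = fn e i].
Proof. by rewrite inE => /existsP[e /andP[eX /existsP[i /eqP ->]]]; exists e, i. Qed.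

Section CycleOfH.
Variables (k : nat) (vsH : 'I_k -> mV H) (esH : 'I_k -> mE H).
Hypothesis cycH : cycle_in vsH esH.
Notation X := [set esH i | i : 'I_k].

Lemma branch_vertex_deg2 (m : 'I_k) :
  deg2_at (path_vertices X) (path_edges X) (phi (vsH m)).
Proof.
have [k_gt1 [_ [esH_inj esH_joins]]] := cycH.
have [i1 [j1 [i1l j1l J1]]] := @path_end_edge (esH m) (vsH m)
  ltac:(by case: (esH_joins m) => ->; auto).
have [i2 [j2 [i2l j2l J2]]] := @path_end_edge (esH (ord_pred m)) (vsH m)
  ltac:(by case: (esH_joins (ord_pred m)); rewrite ord_predK => ->; auto).
have [inc1 _ oth1] := joinsP J1; have [inc2 _ oth2] := joinsP J2.
exists (fn (esH m) i1), (fn (esH (ord_pred m)) i2); split; split=> //.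
- apply/eqP => /(fn_inj i1l i2l) [/esH_inj Em _].
  by move: (ord_pred_neq m k_gt1); rewrite -Em eqxx.
- exact/mem_path_edges/i1l/imset_f.
- exact/mem_path_edges/i2l/imset_f.
- by rewrite oth1; apply/mem_path_vertices/j1l/imset_f.
- by rewrite oth2; apply/mem_path_vertices/j2l/imset_f.
Qed.

Lemma path_vertices_deg2 :
  {in path_vertices X, forall y, deg2_at (path_vertices X) (path_edges X) y}.
Proof.
have [_ [_ [_ esH_joins]]] := cycH.
move=> y /path_verticesP [_ [j [/imsetP[i _ ->] jl ->]]]; set e := esH i in jl *.
have [end1 end2] : [\/ (mends e).1 = vsH i | (mends e).1 = vsH (ordS i)] /\
    [\/ (mends e).2 = vsH i | (mends e).2 = vsH (ordS i)].
  by case: (esH_joins i) => ->; split; auto.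
case: (posnP j) => [->|j_gt0].
  by rewrite wn_first; case: end1 => ->; apply: branch_vertex_deg2.
case: (ltngtP j (l e)) => [j_lt||->]; [|lia|]; last first.
  by rewrite wn_last; case: end2 => ->; apply: branch_vertex_deg2.
have Jprev : joins (fn e j.-1) (wn e j) (wn e j.-1).
  by apply: joins_sym; rewrite -[in wn e j](prednK j_gt0); apply: fn_joins; lia.
have [inc1 _ oth1] := joinsP Jprev; have [inc2 _ oth2] := joinsP (fn_joins j_lt).
have eX : e \in X by apply: imset_f.
exists (fn e j.-1), (fn e j); split; split=> //.
- by apply/eqP => /fn_inj [||_]; lia.
- by apply: mem_path_edges; lia.
- exact: mem_path_edges.
- by rewrite oth1; apply: mem_path_vertices; lia.
- by rewrite oth2; apply: mem_path_vertices; lia.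
Qed.

End CycleOfH.

Section CycleThroughPaths.
Variables (X : {set mE H}) (k : nat) (vs : 'I_k -> mV G) (es : 'I_k -> mE G).
Hypotheses (cyc : cycle_in vs es) (es_paths : forall r, es r \in path_edges X).
Notation C := [set es r | r : 'I_k].

Lemma cycle_edges_at_internal e j : 0 < j < l e -> forall r,
  incident (es r) (wn e j) -> es r = fn e j.-1 \/ es r = fn e j.
Proof.
move=> jl r inc_r; have [e' [i [_ il Er]]] := path_edgesP (es_paths r).
rewrite Er in inc_r *; have [-> [->|<-]] := internal_incident jl il inc_r; auto.
Qed.

Lemma cycle_in_paths_covers_path e j0 : j0 < l e -> fn e j0 \in C ->
  [set fn e j | j : 'I_(l e)] \subset C.
Proof.
move=> j0l fn_j0; apply/subsetP => _ /imsetP[j _ ->].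
apply: (@ltn_propagate (fun j => fn e j \in C) _ _ j0l fn_j0 _ _ (ltn_ord j)).
move=> {}j jl fn_in.
have [m vs_m] : exists m, vs m = wn e j.+1.
  case: fn_in => /imsetP[r _ Er]; apply: (cycle_vertex_incident cyc (r := r)); rewrite -Er.
  - by have [] := joinsP (fn_joins (ltnW jl)).
  - by have [] := joinsP (fn_joins jl).
have [r1 [r2 [ne inc1 inc2]]] := cycle_edges_at cyc m; rewrite vs_m in inc1 inc2.
have jl' : 0 < j.+1 < l e by rewrite jl.
case: (cycle_edges_at_internal jl' inc1) => /= E1;
  case: (cycle_edges_at_internal jl' inc2) => /= E2;
  by [move: ne; rewrite E1 E2 eqxx | rewrite -E1 -E2 !imset_f].
Qed.

Lemma cycle_in_paths_longer e j0 : j0 < l e -> fn e j0 \in C -> l e < k.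
Proof.
move=> j0l fn_j0; have path_sub := cycle_in_paths_covers_path j0l fn_j0.
have l_gt0 : 0 < l e by lia.
have [m vs_m] : exists m, vs m = wn e 0.
  have /imsetP[r _ Er] : fn e 0 \in C.
    by apply: (subsetP path_sub); apply/imsetP; exists (Ordinal l_gt0).
  apply: (cycle_vertex_incident cyc (r := r)); rewrite -Er.
  by have [] := joinsP (fn_joins l_gt0).
have [r1 [r2 [ne inc1 inc2]]] := cycle_edges_at cyc m; rewrite vs_m in inc1 inc2.
have first_edge r : incident (es r) (wn e 0) -> es r \in [set fn e j | j : 'I_(l e)] ->
    es r = fn e 0.
  move=> inc_r /imsetP[j _ Er]; rewrite Er in inc_r *.
  case: (joins_incident (fn_joins (ltn_ord j)) inc_r) => E0.
    by have <- := @wn_inj e 0 j (leq0n _) (ltnW (ltn_ord j)) E0.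
  by have := @wn_inj e 0 j.+1 (leq0n _) (ltn_ord j) E0.
(* At its first vertex the path has only one edge, but the cycle has two. *)
have: [set fn e j | j : 'I_(l e)] \proper C.
  apply/properP; split=> //.
  case: (boolP (es r1 \in [set fn e j | j : 'I_(l e)])) => [p1|];
    last by exists (es r1); rewrite ?imset_f.
  case: (boolP (es r2 \in [set fn e j | j : 'I_(l e)])) => [p2|];
    last by exists (es r2); rewrite ?imset_f.
  by move: ne; rewrite (first_edge _ inc1 p1) (first_edge _ inc2 p2) eqxx.
move/proper_card; rewrite card_imset; last first.
  by move=> a b /fn_inj [] // _ /ord_inj.
rewrite card_ord => /leq_trans; apply.
by apply: leq_trans (leq_imset_card _ _) _; rewrite card_ord.
Qed.

End CycleThroughPaths.

Section PathCodes.
Variables (p c : nat) (col : mE G -> 'I_c).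
Hypothesis t_lt_p : t < p.

Definition path_code e : {ffun 'I_p -> 'I_c} := [ffun j : 'I_p => col (fn e j)].

Lemma path_code_colour e e' i : path_code e' = path_code e -> i < l e' ->
  col (fn e' i) \in [set col (fn e j) | j : 'I_(l e)].
Proof.
move=> Ecode il'; have ip : i < p by have := l_bounds e'; lia.
have := congr1 (fun code : {ffun 'I_p -> 'I_c} => code (Ordinal ip)) Ecode.
rewrite !ffunE /= => ->; rewrite fn_clamp.
by apply/imsetP; exists (Ordinal (clamp_lt e i)).
Qed.

Lemma subdivision_forest_colouring : loopless G -> p_colouring p col ->
  forest_colouring (fun e => enum_rank (path_code e)).
Proof.
move=> loopless_G p_col k vsH esH x cycH mono.
have [k_gt1 _] := cycH; pose i0 : 'I_k := Ordinal (ltnW k_gt1).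
pose X := [set esH i | i : 'I_k].
have same_code : {in X, forall e, path_code e = path_code (esH i0)}.
  by move=> _ /imsetP[i _ ->]; apply: enum_rank_inj; rewrite !mono.
have x0_in : wn (esH i0) 0 \in path_vertices X.
  by apply: mem_path_vertices; rewrite ?imset_f.
have [L [vs [es [cyc es_in]]]] := cycle_of_deg2 loopless_G x0_in (path_vertices_deg2 cycH).
have [L_gt1 _] := cyc; pose r0 : 'I_L := Ordinal (ltnW L_gt1).
have [e [j0 [eX j0l Er0]]] := path_edgesP (es_in r0).
have longer : l e < L.
  by apply: (cycle_in_paths_longer cyc es_in j0l); rewrite -Er0 imset_f.
have colours_sub : [set col (es r) | r : 'I_L] \subset [set col (fn e j) | j : 'I_(l e)].
  apply/subsetP => _ /imsetP[r _ ->]; have [e' [i [e'X il ->]]] := path_edgesP (es_in r).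
  by apply: path_code_colour il; rewrite !same_code.
have := leq_trans (p_col L vs es cyc) (subset_leq_card colours_sub).
have : #|[set col (fn e j) | j : 'I_(l e)]| <= l e.
  by rewrite -[leqRHS]card_ord leq_imset_card.
have := l_bounds e; lia.
Qed.

End PathCodes.

End Subdivision.

Lemma subdiv_Arb_le (G H : mgraph) p c (col : mE G -> 'I_c) a :
  loopless G -> 0 < p -> p_colouring p col ->
  subdiv_in G p.-1 H -> is_Arb H a -> a <= c ^ p.
Proof.
move=> loopless_G p_gt0 p_col
  [phi [l [w [f [_ [lb [w0 [wl [fj [wi [wint [wdis finj]]]]]]]]]]]] [_ Arb_min].
have t_lt_p : p.-1 < p by rewrite ltn_predL.
have := Arb_min _ _ (subdivision_forest_colouring (l_bounds := lb)
  w0 wl fj wi wint wdis finj t_lt_p loopless_G p_col).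
by rewrite card_ffun !card_ord.
Qed.

Definition empty_mgraph : mgraph := @MGraph void void (fun v => match v with end).

Lemma empty_is_Arb : is_Arb empty_mgraph 0.
Proof.
split=> [|//]; exists (fun e : void => match e with end) => k vs es x [k_gt1 _].
by case: (es (Ordinal (ltnW k_gt1))).
Qed.

Lemma subdiv_in_empty G t : subdiv_in G t empty_mgraph.
Proof.
exists (fun v : void => match v with end), (fun _ => 1),
  (fun e : void => match e with end), (fun e : void => match e with end).
by do 8 (split; first by case); case.
Qed.

Lemma injective_forest_colouring (H : mgraph) a (col : mE H -> 'I_a) :
  injective col -> forest_colouring col.
Proof.
move=> col_inj k vs es x [k_gt1 [_ [es_inj _]]] mono.
have := col_inj _ _ (etrans (mono (Ordinal (ltnW k_gt1))) (esym (mono (Ordinal k_gt1)))).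
by move/es_inj/(congr1 val).
Qed.

Lemma Arb_exists H : exists a, is_Arb H a.
Proof.
have [a [[col forest_col] a_min]] :=
  @ex_minn_prop (fun a => exists col : mE H -> 'I_a, forest_colouring col) #|mE H|
  (ex_intro _ _ (injective_forest_colouring (@enum_rank_inj _))).
by exists a; split; [exists col | move=> a' col' /(ex_intro _ col')/a_min].
Qed.

Theorem mainTheorem7 (G : mgraph) (p : nat) :
  loopless G -> 0 < p ->
  forall c, is_Arbp G p c ->
  exists M, is_max_Arb G p.-1 M /\ M <= c ^ p /\
    (forall q : rat, is_nabla_m G p.-1 q -> (q <= M%:R)%R).
Proof.
move=> loopless_G p_gt0 c [[col p_col] _].
have Arb_le H a : subdiv_in G p.-1 H -> is_Arb H a -> a <= c ^ p.
  exact: subdiv_Arb_le loopless_G p_gt0 p_col.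
pose P a := exists H, loopless H /\ subdiv_in G p.-1 H /\ is_Arb H a.
have [M [[H_M [lH_M [sH_M aH_M]]] M_max]] : exists M, P M /\ forall a, P a -> a <= M.
  apply: (@ex_maxn_prop P (c ^ p) 0).
    exists empty_mgraph; split; first by case.
    by split; [exact: subdiv_in_empty | exact: empty_is_Arb].
  by move=> a [H [_ [sH aH]]]; exact: Arb_le sH aH.
exists M; split; first by split=> [|H a lH sH aH]; [exists H_M | apply: M_max; exists H].
split; first exact: Arb_le sH_M aH_M.
move=> q [[H [lH [sH [V_gt0 ->]]]] _].
have [a aH] := Arb_exists H; have [[colH forest_colH] _] := aH.
have aM : a <= M by apply: M_max; exists H.
rewrite ler_pdivrMr ?ltr0n // -natrM ler_nat.
exact: leq_trans (forest_card_edges lH forest_colH) (leq_mul aM (leqnn _)).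
Qed.
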